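(* The following four vertex-weighted multigraphs, all of which are simple graphs (at most one edge between any two vertices) with every vertex of weight $2$, are admissibly contractible: $K_1$, the complete graph on 5 vertices; $K_2$, the graph on vertices $v_1,\dots,v_6$ with edges $v_1v_2,v_1v_3,v_1v_5,v_1v_6,v_2v_3,v_2v_4,v_2v_6,v_3v_4,v_3v_5,v_4v_5,v_4v_6,v_5v_6$ (the complete tripartite graph $K_{2,2,2}$); $K_3$, the graph on vertices $v_1,\dots,v_7$ in which $v_1$ is adjacent to all other vertices and, among $v_2,\dots,v_7$, each of $v_2,v_4,v_6$ is adjacent to each of $v_3,v_5,v_7$ and there are no other edges; $K_4$, the complete bipartite graph $K_{4,4}$ with parts $\{v_1,v_3,v_5,v_7\}$ and $\{v_2,v_4,v_6,v_8\}$.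
   Context: A vertex-weighted multigraph is a quadruple $G=(V,E,r,\mathrm{wt})$ with $V$ a finite set of vertices, $E$ a finite set of edges, $r$ assigning to each edge an unordered pair $\{v,w\}$ of distinct vertices, and $\mathrm{wt}:V\to\mathbb{Z}$. $\deg(v)$ is the number of edges incident to $v$. For adjacent vertices $v,w$, the contraction with respect to $\{v,w\}$ identifies $v,w$ to one vertex of weight $\mathrm{wt}(v)+\mathrm{wt}(w)$, deletes all edges between $v$ and $w$, and keeps all other edges (endpoints replaced via the identification) and weights. Let $m$ be the number of edges between $v$ and $w$. The contraction is admissible if, for some labeling of the pair as $v,w$, there is an integer $0\leq l<m$ with: every vertex $x\notin\{v,w\}$ has $\deg(x)\geq 3$; $\mathrm{wt}(v)\geq l+1$, $\mathrm{wt}(w)\geq l+2$; $\deg(v)-m+l\geq 3$ and $\deg(w)-m+l\geq3$. A vertex-weighted multigraph is admissibly contractible if a finite sequence of admissible contractions transforms it into a single vertex. *)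

From mathcomp Require Import all_boot all_order all_algebra.
Set Implicit Arguments. Unset Strict Implicit. Unset Printing Implicit Defensive.
Import Order.TTheory GRing.Theory Num.Theory.

(* A vertex-weighted multigraph with vertices labelled by naturals:
   [verts] is the (duplicate-free) vertex list, [edges] is the list of edges
   (each edge is a pair of endpoints, read as the unordered pair {e.1,e.2};
   repeated entries are parallel edges), [wt] is the weight function. *)
Record mgraph := MG { verts : seq nat; edges : seq (nat * nat); wt : nat -> int }.

Definition wf_mgraph (G : mgraph) : bool :=
  uniq (verts G) &&
  all (fun e : nat * nat => [&& e.1 != e.2, e.1 \in verts G & e.2 \in verts G])
      (edges G).

Definition joins (v w : nat) (e : nat * nat) : bool :=
  ((e.1 == v) && (e.2 == w)) || ((e.1 == w) && (e.2 == v)).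

Definition deg (G : mgraph) (x : nat) : nat :=
  count (fun e : nat * nat => (e.1 == x) || (e.2 == x)) (edges G).

Definition mult (G : mgraph) (v w : nat) : nat := count (joins v w) (edges G).

Definition contract (G : mgraph) (v w : nat) : mgraph :=
  let ren x := if x == w then v else x in
  MG [seq x <- verts G | x != w]
     [seq (ren e.1, ren e.2) | e <- edges G & ~~ joins v w e]
     (fun x => if x == v then (wt G v + wt G w)%R else wt G x).

Definition adm_label (G : mgraph) (v w : nat) : Prop :=
  exists l : nat, l < mult G v w /\
    (forall x, x \in verts G -> x != v -> x != w -> 3 <= deg G x) /\
    (Posz l.+1 <= wt G v)%R /\ (Posz l.+2 <= wt G w)%R /\
    (* deg v - m + l >= 3  and  deg w - m + l >= 3 *)
    3 + mult G v w <= deg G v + l /\ 3 + mult G v w <= deg G w + l.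

Definition admissible (G : mgraph) (v w : nat) : Prop :=
  [/\ v \in verts G, w \in verts G, v != w, 0 < mult G v w &
      adm_label G v w \/ adm_label G w v].

Inductive contractible : mgraph -> Prop :=
  | contr_single G : size (verts G) = 1 -> contractible G
  | contr_step G v w : admissible G v w -> contractible (contract G v w) ->
                       contractible G.

Definition wt2 : nat -> int := fun _ => Posz 2.

Definition K1 : mgraph :=
  MG [:: 1; 2; 3; 4; 5]
     [:: (1,2); (1,3); (1,4); (1,5); (2,3); (2,4); (2,5); (3,4); (3,5); (4,5)]
     wt2.

Definition K2 : mgraph :=
  MG [:: 1; 2; 3; 4; 5; 6]
     [:: (1,2); (1,3); (1,5); (1,6); (2,3); (2,4); (2,6); (3,4); (3,5);
         (4,5); (4,6); (5,6)]
     wt2.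

Definition K3 : mgraph :=
  MG [:: 1; 2; 3; 4; 5; 6; 7]
     [:: (1,2); (1,3); (1,4); (1,5); (1,6); (1,7);
         (2,3); (2,5); (2,7); (4,3); (4,5); (4,7); (6,3); (6,5); (6,7)]
     wt2.

Definition K4 : mgraph :=
  MG [:: 1; 2; 3; 4; 5; 6; 7; 8]
     [:: (1,2); (1,4); (1,6); (1,8); (3,2); (3,4); (3,6); (3,8);
         (5,2); (5,4); (5,6); (5,8); (7,2); (7,4); (7,6); (7,8)]
     wt2.

From mathcomp Require Import all_boot all_order all_algebra.
Import Order.TTheory GRing.Theory Num.Theory.

(* Each graph is contracted to a point by an explicit sequence of pairs; the
   admissibility of every step is a decidable property of a finite graph, so
   the whole certificate is checked by evaluation. *)

Definition adm_labelb (G : mgraph) (v w l : nat) : bool :=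
  [&& l < mult G v w,
      all (fun x => [|| x == v, x == w | 3 <= deg G x]) (verts G),
      (Posz l.+1 <= wt G v)%R, (Posz l.+2 <= wt G w)%R,
      3 + mult G v w <= deg G v + l & 3 + mult G v w <= deg G w + l].

Lemma adm_labelb_sound G v w l : adm_labelb G v w l -> adm_label G v w.
Proof.
case/and5P=> lt_l /allP deg3 wt_v wt_w /andP[deg_v deg_w].
exists l; do !split => //.
by move=> x xG xv xw; move: (deg3 x xG); rewrite (negbTE xv) (negbTE xw).
Qed.

Definition admissibleb (G : mgraph) (v w : nat) : bool :=
  [&& v \in verts G, w \in verts G, v != w, 0 < mult G v w &
      has (fun l => adm_labelb G v w l || adm_labelb G w v l)
          (iota 0 (mult G v w))].

Lemma admissibleb_sound G v w : admissibleb G v w -> admissible G v w.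
Proof.
case/and5P=> vG wG vw adj /hasP[l _ /orP[/adm_labelb_sound | /adm_labelb_sound]] lab.
  by split=> //; left.
by split=> //; right.
Qed.

Fixpoint contracts_by (G : mgraph) (s : seq (nat * nat)) : bool :=
  if s is (v, w) :: s' then admissibleb G v w && contracts_by (contract G v w) s'
  else size (verts G) == 1.

Lemma contracts_by_contractible G s : contracts_by G s -> contractible G.
Proof.
elim: s G => [|[v w] s IHs] G /=; first by move/eqP; exact: contr_single.
by case/andP=> /admissibleb_sound adm /IHs; exact: contr_step.
Qed.

Definition K1_contraction : seq (nat * nat) := [:: (1, 2); (1, 3); (4, 5); (1, 4)].

Definition K2_contraction : seq (nat * nat) :=
  [:: (1, 2); (1, 3); (1, 4); (5, 6); (1, 5)].

Definition K3_contraction : seq (nat * nat) :=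
  [:: (1, 2); (1, 3); (1, 4); (5, 6); (5, 7); (1, 5)].

Definition K4_contraction : seq (nat * nat) :=
  [:: (1, 2); (1, 3); (1, 4); (1, 5); (6, 7); (6, 8); (1, 6)].

Theorem proposition3p5 :
  [/\ wf_mgraph K1, wf_mgraph K2, wf_mgraph K3 & wf_mgraph K4] /\
  [/\ contractible K1, contractible K2, contractible K3 & contractible K4].
Proof.
split; first by split; vm_compute.
split.
- by apply: (@contracts_by_contractible _ K1_contraction); vm_compute.
- by apply: (@contracts_by_contractible _ K2_contraction); vm_compute.
- by apply: (@contracts_by_contractible _ K3_contraction); vm_compute.
- by apply: (@contracts_by_contractible _ K4_contraction); vm_compute.
Qed.
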